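(* Let $\Gamma$ be a non-abelian $2$-generated finite $p$-group ($p$ odd) with cyclic derived subgroup and $\mathrm{inv}(\Gamma)=(p,m,n_1,n_2,o_1,o_2,o'_1,o'_2,u_1,u_2)$, satisfying $o_1\ne o_2$, $0<\max(o'_1,o'_2)<m$ and $n_2\ge2$. Then the natural projection $$\Delta_\Gamma:\frac{\mathcal I(\Gamma')k\Gamma}{\mathcal I(\Gamma')\mathcal I(\Gamma)}\to\frac{\mathcal I(\Gamma')k\Gamma+\mathcal I(\Gamma)^3}{\mathcal I(\Gamma)^3},\quad x+\mathcal I(\Gamma')\mathcal I(\Gamma)\mapsto x+\mathcal I(\Gamma)^3,$$ is a well-defined isomorphism of $k$-vector spaces (both spaces being one-dimensional).
   Context: $k=\mathbb F_p$, $\mathcal I(X)$ is the augmentation ideal of $kX$, $\Gamma'$ the derived subgroup. For a list $I=(p,m,n_1,n_2,o_1,o_2,o'_1,o'_2,u_1,u_2)$ of non-negative integers let $\mathcal G_I=\langle b_1,b_2 \mid a=[b_2,b_1],\ a^{p^m}=1,\ a^{b_i}=a^{r_i},\ b_i^{p^{n_i}}=a^{u_ip^{m-o'_i}}\ (i=1,2)\rangle$, where $[g,h]=g^{-1}h^{-1}gh$, $a^{b}=b^{-1}ab$, $r_1=1+p^{m-o_1}$, and $r_2=1+p^{m-o_2}$ if $o_2>o_1$, $r_2=r_1^{p^{o_1-o_2}}$ otherwise. By a known classification, for every non-abelian $2$-generated finite $p$-group $\Gamma$ with cyclic derived subgroup there is a unique such list $I$ satisfying conditions (I)–(VI) below with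 $\Gamma\cong\mathcal G_I$; it is denoted $\mathrm{inv}(\Gamma)$. (I) $n_1\ge n_2\ge1$. (II) $0\le o_i<\min(m,n_i)$, $0\le o'_i\le m-o_i$ and $p\nmid u_i$ for $i=1,2$. (III) One of: (a) $o_1=0$ and $o'_1\le o'_2\le o'_1+o_2+n_1-n_2$; (b) $o_2=0<o_1$, $n_2<n_1$ and $o'_1+\min(0,n_1-n_2-o_1)\le o'_2\le o'_1+n_1-n_2$; (c) $0<o_2<o_1<o_2+n_1-n_2$ and $o'_1\le o'_2\le o'_1+n_1-n_2$. (IV) $o_2+o'_1\le m\le n_1$ and one of: (a) $o_1+o'_2\le m\le n_2$; (b) $2m-o_1-o'_2=n_2<m$ and $u_2\equiv1 \pmod{p^{m-n_2}}$. (V) $1\le u_1\le p^{a_1}$, where $a_1=\min(o'_1,\ o_2+\min(n_1-n_2+o'_1-o'_2,0))$. (VI) One of: (a) $1\le u_2\le p^{a_2}$; (b) $o_1o_2\ne0$, $n_1-n_2+o'_1-o'_2=0<a_1$, $1+p^{a_2}\le u_2\le 2p^{a_2}$ and $u_1\equiv1\pmod p$; where $a_2=0$ if $o_1=0$; $a_2=\min(o_1,\,o'_2,\,o'_2-o'_1+\max(0,o_1+n_2-n_1))$ if $o_2=0<o_1$; and $a_2=\min(o_1-o_2,\,o'_2-o'_1)$ otherwise. *)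

From HB Require Import structures.
From mathcomp Require Import all_boot all_order all_algebra all_fingroup all_solvable.
Set Implicit Arguments. Unset Strict Implicit. Unset Printing Implicit Defensive.
Import GRing.Theory Num.Theory.

Section GroupAlgebra.
Local Open Scope ring_scope.
Variables (F : fieldType) (gT : finGroupType).

Definition galg := {ffun gT -> F^o}.

Definition gel (g : gT) : galg := [ffun h => ((h == g)%:R : F)].

Definition gmul (x y : galg) : galg :=
  [ffun g => \sum_(h : gT) (x h : F) * (y ((h^-1 * g)%g) : F)].

(* augmentation ideal of F[H] (H a subgroup), seen inside F[gT]:
   spanned by the elements h - 1, h in H *)
Definition aug (H : {set gT}) : {vspace galg} :=
  span [seq gel h - gel 1%g | h <- enum H].

Definition gprodv (U V : {vspace galg}) : {vspace galg} :=
  span [seq gmul u v | u <- vbasis U, v <- vbasis V].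

End GroupAlgebra.

Section Invariants.
Local Open Scope nat_scope.

Definition r1 (p m o1 : nat) := 1 + p ^ (m - o1).
Definition r2 (p m o1 o2 : nat) :=
  if o2 > o1 then 1 + p ^ (m - o2) else (r1 p m o1) ^ (p ^ (o1 - o2)).

Definition isog_GI (gT : finGroupType) (G : {set gT})
  (p m n1 n2 o1 o2 o1' o2' u1 u2 : nat) : Prop :=
  (G \isog Grp (b1 : b2 :
     ([~ b2, b1] ^+ (p ^ m) = 1,
      [~ b2, b1] ^ b1 = [~ b2, b1] ^+ (r1 p m o1),
      [~ b2, b1] ^ b2 = [~ b2, b1] ^+ (r2 p m o1 o2),
      b1 ^+ (p ^ n1) = [~ b2, b1] ^+ (u1 * p ^ (m - o1')),
      b2 ^+ (p ^ n2) = [~ b2, b1] ^+ (u2 * p ^ (m - o2')))))%g.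

Local Open Scope ring_scope.

Definition qpow (p : nat) (a : int) : rat := (p%:Q) ^ a.

Definition a1_of (m n1 n2 o1 o2 o1' o2' : nat) : int :=
  Num.min (o1' : int) (o2%:Z + Num.min (n1%:Z - n2%:Z + o1'%:Z - o2'%:Z) 0).

Definition a2_of (m n1 n2 o1 o2 o1' o2' : nat) : int :=
  if (o1 == 0)%N then 0
  else if (o2 == 0)%N then
    Num.min (o1 : int) (Num.min (o2' : int)
            (o2'%:Z - o1'%:Z + Num.max 0 (o1%:Z + n2%:Z - n1%:Z)))
  else Num.min (o1%:Z - o2%:Z) (o2'%:Z - o1'%:Z).

Definition inv_conditions (p m n1 n2 o1 o2 o1' o2' u1 u2 : nat) : Prop :=
  let a1 := a1_of m n1 n2 o1 o2 o1' o2' in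
  let a2 := a2_of m n1 n2 o1 o2 o1' o2' in
  [/\ (n2 <= n1 /\ 1 <= n2)%N,
   [/\ (o1 < minn m n1)%N, (o2 < minn m n2)%N, (o1' <= m - o1)%N,
       (o2' <= m - o2)%N & ~~ (p %| u1)%N /\ ~~ (p %| u2)%N],
   [\/ (o1 == 0)%N /\ (o1' <= o2' <= o1' + o2 + n1 - n2)%N,
       [/\ (o2 == 0)%N, (0 < o1)%N, (n2 < n1)%N,
           o1'%:Z + Num.min 0 (n1%:Z - n2%:Z - o1%:Z) <= o2'%:Z
         & (o2' <= o1' + n1 - n2)%N]
     | [/\ (0 < o2)%N, (o2 < o1)%N, (o1 < o2 + n1 - n2)%N
         & (o1' <= o2' <= o1' + n1 - n2)%N]],
   [/\ (o2 + o1' <= m)%N, (m <= n1)%N &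
       ((o1 + o2' <= m)%N /\ (m <= n2)%N \/
        [/\ 2 * m%:Z - o1%:Z - o2'%:Z = n2%:Z, (n2 < m)%N
          & (u2 == 1 %[mod p ^ (m - n2)])%N])] &
   ((1 <= u1)%N /\ u1%:Q <= qpow p a1) /\
   ((1 <= u2)%N /\ u2%:Q <= qpow p a2 \/
    [/\ (o1 * o2 != 0)%N, n1%:Z - n2%:Z + o1'%:Z - o2'%:Z = 0, 0 < a1,
        1 + qpow p a2 <= u2%:Q /\ u2%:Q <= 2 * qpow p a2
      & (u1 == 1 %[mod p])%N])].

(* inv(G) = I : I satisfies (I)-(VI) and G is isomorphic to G_I
   (by the classification such an I is unique) *)
Definition inv_is (gT : finGroupType) (G : {set gT})
  (p m n1 n2 o1 o2 o1' o2' u1 u2 : nat) : Prop :=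
  inv_conditions p m n1 n2 o1 o2 o1' o2' u1 u2 /\
  isog_GI G p m n1 n2 o1 o2 o1' o2' u1 u2.

End Invariants.

From HB Require Import structures.
From mathcomp Require Import all_boot all_order all_algebra all_fingroup all_solvable.
From mathcomp Require Import ring.
Import GRing.Theory.
Set Implicit Arguments. Unset Strict Implicit. Unset Printing Implicit Defensive.

(* Write e := a - 1 for a generator a of the cyclic group G'.  Expanding
   a^(i+1) - 1 = (a^i - 1)(a - 1) + (a^i - 1) + (a - 1) and v = (v - eps(v)) + eps(v)
   gives I(G')kG = I(G')I(G) + k e, while commutator identities give
   I(G') <= I(G)^2, hence I(G')I(G) <= I(G)^3.  So both quotients are spanned by the
   class of e and everything reduces to e \notin I(G)^3.  The relations of G_I hold in
   the Heisenberg group of order p^3 (this uses o_i, o'_i < m and n_i > 0), so G maps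
   onto it, and since a generates G' its image is non-trivial.  Composing with the
   unitriangular 3 x 3 representation of the Heisenberg group gives an algebra map
   killing I(G)^3 (a product of three strictly upper triangular matrices) but not e. *)

Section GroupAlgebra.
Variables (F : fieldType) (gT : finGroupType).
Local Open Scope ring_scope.
Local Notation V := (galg F gT).
Local Notation gel := (gel F).
Local Notation aug := (aug F).
Local Notation IG := (aug [set: gT]).

Lemma gmul_is_bilinear : bilinear_for *:%R *:%R (@gmul F gT).
Proof.
split=> [z a x y | x a y z]; apply/ffunP => g; rewrite !ffunE scaler_sumr -big_split;
  apply: eq_bigr => h _; rewrite !ffunE /=.
- by rewrite mulrDl; congr (_ + _); exact: esym (mulrA _ _ _).
- by rewrite mulrDr; congr (_ + _); exact: mulrCA.
Qed.

HB.instance Definition _ :=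
  bilinear_isBilinear.Build F V V V *:%R *:%R (@gmul F gT) gmul_is_bilinear.

Lemma gelE (g h : gT) : gel g h = (h == g)%:R.
Proof. exact: ffunE. Qed.

Lemma gmul_gel (g h : gT) : gmul (gel g) (gel h) = gel (g * h)%g.
Proof.
apply/ffunP => x; rewrite !ffunE (bigD1 g) //= big1 => [|k /negbTE kg].
  rewrite !gelE eqxx mul1r addr0; congr (_%:R).
  by rewrite -(inj_eq (mulgI g)) mulKVg.
by rewrite gelE kg mul0r.
Qed.

Lemma gmul_gel1r (x : V) : gmul x (gel 1%g) = x.
Proof.
apply/ffunP => g; rewrite ffunE (bigD1 g) //= big1 => [|k kg].
  by rewrite gelE mulVg eqxx mulr1 addr0.
rewrite gelE; case: eqP => [|_]; last by rewrite mulr0.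
by move/(canRL (mulKVg k))/esym; rewrite mulg1 => /eqP; rewrite (negbTE kg).
Qed.

Lemma galg_sum_gel (x : V) : x = \sum_g x g *: gel g.
Proof.
apply/ffunP => h; rewrite sum_ffunE (bigD1 h) //= big1 => [|k kh]; rewrite ffunE gelE.
  by rewrite eqxx addr0 [RHS]mulr1.
by rewrite eq_sym (negbTE kh) scaler0.
Qed.

Lemma gprodv_sub (U W X : {vspace V}) :
  (forall u v, u \in U -> v \in W -> gmul u v \in X) -> (gprodv U W <= X)%VS.
Proof.
move=> UWX; apply/span_subvP => _ /allpairsP[[u v] /= [Uu Wv ->]].
by apply: UWX; apply: vbasis_mem.
Qed.

Lemma mem_gprodv (U W : {vspace V}) u v :
  u \in U -> v \in W -> gmul u v \in gprodv U W.
Proof.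
move=> Uu Wv; rewrite (coord_vbasis Uu) (coord_vbasis Wv) linear_sumlz.
apply: rpred_sum => i _; rewrite linear_sumr; apply: rpred_sum => j _.
rewrite linearZl_LR linearZr_LR; do 2!apply: rpredZ.
by apply/memv_span/allpairs_f; apply: mem_nth; rewrite size_tuple.
Qed.

Lemma gprodvS (U U' W W' : {vspace V}) :
  (U <= U')%VS -> (W <= W')%VS -> (gprodv U W <= gprodv U' W')%VS.
Proof.
move=> sUU' sWW'; apply: gprodv_sub => u v Uu Wv.
by apply: mem_gprodv; [apply: (subvP sUU') | apply: (subvP sWW')].
Qed.

Lemma mem_aug (H : {set gT}) h : h \in H -> gel h - gel 1%g \in aug H.
Proof. by move=> Hh; apply/memv_span/mapP; exists h; rewrite ?mem_enum. Qed.

Lemma mem_augB (G : {group gT}) u w : u \in G -> w \in G -> gel u - gel w \in aug G.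
Proof.
move=> Gu Gw; rewrite -(subrKA (gel 1%g)) -[gel 1%g - gel w]opprB.
by rewrite rpredB ?mem_aug.
Qed.

Lemma gmul_gel_sub1 (u w y : gT) :
  gmul (gel u - gel w) (gel y - gel 1%g) = gel (u * y)%g - gel u - (gel (w * y)%g - gel w).
Proof. by rewrite linearBl !linearBr /= !gmul_gel !mulg1. Qed.

Lemma gel_mul_sub1 (x y : gT) :
  gel (x * y)%g - gel 1%g =
  gmul (gel x - gel 1%g) (gel y - gel 1%g) + (gel x - gel 1%g) + (gel y - gel 1%g).
Proof. by rewrite gmul_gel_sub1 mul1g addrAC subrK subrKA. Qed.

Lemma gmul_gel_comm (w x y : gT) :
  gmul (gel (w * x)%g - gel w) (gel y - gel 1%g) - gmul (gel (w * y)%g - gel w) (gel x - gel 1%g)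
  = gel (w * x * y)%g - gel (w * y * x)%g.
Proof.
rewrite !gmul_gel_sub1 -[gel (w * x * y)%g - _ - _]addrA -[gel (w * y * x)%g - _ - _]addrA.
by rewrite -!opprD addrCA opprB subrKA.
Qed.

Lemma aug_der1_sub (G : {group gT}) : (aug (G^`(1))%g <= gprodv (aug G) (aug G))%VS.
Proof.
pose S := [set h in G | gel h - gel 1%g \in gprodv (aug G) (aug G)].
have groupS : group_set S.
  apply/group_setP; split=> [|x y]; first by rewrite inE group1 subrr mem0v.
  rewrite !inE => /andP[Gx IIx] /andP[Gy IIy]; rewrite groupM //=.
  rewrite gel_mul_sub1; apply: rpredD => //; apply: rpredD => //.
  by apply: mem_gprodv; apply: mem_aug.
have G'S : (G^`(1) \subset group groupS)%g.
  rewrite derg1 gen_subG; apply/subsetP => _ /imset2P[x y Gx Gy ->].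
  rewrite inE groupR //=.
  have -> : [~ x, y]%g = ((y * x)^-1 * x * y)%g by rewrite invMg /commg /conjg !mulgA.
  have -> : 1%g = ((y * x)^-1 * y * x)%g by rewrite -mulgA mulVg.
  have Gw : ((y * x)^-1 \in G)%g by rewrite groupV groupM.
  by rewrite -gmul_gel_comm; apply: rpredB; apply: mem_gprodv; apply: mem_augB;
    rewrite ?groupM.
apply/span_subvP => _ /mapP[h G'h ->]; rewrite mem_enum in G'h.
by have := subsetP G'S h G'h; rewrite inE => /andP[].
Qed.

Lemma aug_cycle_sub (a : gT) :
  (aug <[a]>%g <= gprodv (aug <[a]>%g) IG + <[gel a - gel 1%g]>)%VS.
Proof.
apply/span_subvP => _ /mapP[_ /[!mem_enum] /cycleP[i ->] ->].
elim: i => [|i IHi]; first by rewrite subrr mem0v.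
rewrite expgSr gel_mul_sub1; apply: rpredD; last exact/(subvP (addvSr _ _))/memv_line.
rewrite rpredD //; apply/(subvP (addvSl _ _))/mem_gprodv; apply: mem_aug.
  by rewrite mem_cycle.
by rewrite inE.
Qed.

Lemma gprodv_fullr (U : {vspace V}) : gprodv U fullv = (gprodv U IG + U)%VS.
Proof.
apply/eqP; rewrite eqEsubv subv_add gprodvS ?subvf //=; apply/andP; split.
  apply: gprodv_sub => u v Uu _.
  pose eps := \sum_g v g.
  rewrite -(subrK (eps *: gel 1%g) v) linearDr linearZr_LR /= gmul_gel1r.
  apply: rpredD; last exact/(subvP (addvSr _ _))/rpredZ.
  apply/(subvP (addvSl _ _))/mem_gprodv => //.
  rewrite {1}[v]galg_sum_gel /eps scaler_suml -sumrB.
  by apply: rpred_sum => g _; rewrite -scalerBr rpredZ ?mem_aug ?inE.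
by apply/subvP => u Uu; rewrite -[u]gmul_gel1r mem_gprodv ?memvf.
Qed.

Lemma gprodv_aug_cycle_fullr (a : gT) :
  gprodv (aug <[a]>%g) fullv = (gprodv (aug <[a]>%g) IG + <[gel a - gel 1%g]>)%VS.
Proof.
rewrite gprodv_fullr; apply/eqP; rewrite eqEsubv !subv_add addvSl aug_cycle_sub /=.
by rewrite -memvE addvSl; apply/(subvP (addvSr _ _))/mem_aug/cycle_id.
Qed.

End GroupAlgebra.

Section LineOverSubspace.
Variables (K : fieldType) (vT : vectType K).
Local Open Scope ring_scope.

Lemma dimv_addv_line (U : {vspace vT}) v : v \notin U -> \dim (U + <[v]>) = (\dim U).+1.
Proof.
move=> Uv; have v_neq0 : v != 0 by apply: contraNneq Uv => ->; rewrite mem0v.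
rewrite dimv_disjoint_sum ?dim_vline ?v_neq0 ?addn1 //.
apply/eqP; rewrite -subv0; apply/subvP => x /memv_capP[Ux /vlineP[k x_def]].
rewrite memv0 x_def; have [->|k_neq0] := eqVneq k 0; first by rewrite scale0r.
by move: Uv; rewrite -[v](scalerK k_neq0) -x_def rpredZ.
Qed.

Lemma quotient_line_iso (B C : {vspace vT}) e :
  (B <= C)%VS -> e \notin C ->
  [/\ \dim (B + <[e]>) = (\dim B).+1,
      \dim (B + <[e]> + C) = (\dim C).+1,
      (forall x, x \in (B + <[e]>)%VS -> x \in B -> x \in C) &
      (forall x, x \in (B + <[e]>)%VS -> x \in C -> x \in B)].
Proof.
move=> sBC Ce; have Be : e \notin B by apply: contra Ce; apply: (subvP sBC).
split=> [||x _ /(subvP sBC) //|].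
- exact: dimv_addv_line.
- rewrite -addvA [(_ + C)%VS]addvC addvA (addv_idPr sBC); exact: dimv_addv_line.
move=> _ /memv_addP[b Bb [_ /vlineP[k ->] ->]] Cx.
have [->|k_neq0] := eqVneq k 0; first by rewrite scale0r addr0.
case/negP: Ce; rewrite -(scalerK k_neq0 e) rpredZ //.
by rewrite -(addKr b (k *: e)) rpredD // rpredN (subvP sBC).
Qed.

End LineOverSubspace.

Section UnitriangularRepresentation.
Local Open Scope ring_scope.
Variables (F : fieldType) (gT : finGroupType) (n : nat) (M : gT -> 'M[F]_n).
Hypothesis MM : forall g h, M (g * h)%g = M g *m M h.
Hypothesis M_unitriangular : forall g (i j : 'I_n), (j <= i)%N -> M g i j = (i == j)%:R.
Local Notation V := (galg F gT).
Local Notation IG := (aug F [set: gT]).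

Definition galg_rep (x : V) : 'M[F]_n := \sum_g x g *: M g.

Lemma galg_rep_is_linear : linear galg_rep.
Proof.
move=> a x y; rewrite /galg_rep scaler_sumr -big_split; apply: eq_bigr => g _.
by rewrite !ffunE scalerA scalerDl.
Qed.

HB.instance Definition _ := GRing.isLinear.Build F V _ _ galg_rep galg_rep_is_linear.

Lemma galg_rep_gel g : galg_rep (gel F g) = M g.
Proof.
rewrite /galg_rep (bigD1 g) //= big1 => [|k /negbTE kg]; rewrite ffunE.
  by rewrite eqxx scale1r addr0.
by rewrite kg scale0r.
Qed.

Lemma galg_rep_mul x y : galg_rep (gmul x y) = galg_rep x *m galg_rep y.
Proof.
rewrite /galg_rep mulmx_suml; under eq_bigr do rewrite ffunE scaler_suml.
rewrite exchange_big /=; apply: eq_bigr => h _.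
rewrite (reindex_inj (mulgI h)) /= -scalemxAl mulmx_sumr scaler_sumr.
by apply: eq_bigr => k _; rewrite mulKg MM -scalemxAr scalerA.
Qed.

Definition band_mask d (x : V) : 'M[F]_n :=
  \matrix_(i, j) ((j < i + d)%N%:R * galg_rep x i j).

Lemma band_mask_is_linear d : linear (band_mask d).
Proof. by move=> a x y; apply/matrixP => i j; rewrite !mxE linearP !mxE mulrDr mulrCA. Qed.

HB.instance Definition _ d :=
  GRing.isLinear.Build F V _ _ (band_mask d) (band_mask_is_linear d).

Definition rep_level d : {vspace V} := lker (linfun (band_mask d)).

Lemma rep_levelP d x :
  reflect (forall i j : 'I_n, (j < i + d)%N -> galg_rep x i j = 0) (x \in rep_level d).
Proof.
rewrite memv_ker lfunE /=; apply: (iffP eqP) => [/matrixP x0 i j ltji | x0].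
  by have := x0 i j; rewrite !mxE ltji mul1r.
by apply/matrixP => i j; rewrite !mxE; case: ltnP => [/x0 ->|]; rewrite ?mulr0 ?mul0r.
Qed.

Lemma rep_level_mul d e x y :
  x \in rep_level d -> y \in rep_level e -> gmul x y \in rep_level (d + e).
Proof.
move=> /rep_levelP x0 /rep_levelP y0; apply/rep_levelP => i j ltji.
rewrite galg_rep_mul mxE big1 // => k _.
have [ltki|leik] := ltnP k (i + d); first by rewrite x0 ?mul0r.
by rewrite y0 ?mulr0 // (leq_trans ltji) // addnA leq_add2r.
Qed.

Lemma aug_rep_level1 : (IG <= rep_level 1)%VS.
Proof.
apply/span_subvP => _ /mapP[h _ ->]; apply/rep_levelP => i j; rewrite addn1 ltnS => leji.
by rewrite linearB /= !galg_rep_gel !mxE !M_unitriangular ?subrr.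
Qed.

Lemma gel_sub1_notin_aug_cube a : (n <= 3)%N -> M a != M 1%g ->
  gel F a - gel F 1%g \notin gprodv (gprodv IG IG) IG.
Proof.
move=> le_n3 Ma_neq; apply: contraNN Ma_neq => C_e.
have IG1 : {subset IG <= rep_level 1} by apply/subvP/aug_rep_level1.
have II2 : (gprodv IG IG <= rep_level 2)%VS.
  by apply: gprodv_sub => u v /IG1 u1 /IG1 v1; exact: (rep_level_mul u1 v1).
have /rep_levelP e0 : gel F a - gel F 1%g \in rep_level 3.
  move: C_e; apply/subvP/gprodv_sub => u v /(subvP II2) u2 /IG1 v1.
  exact: (rep_level_mul u2 v1).
rewrite -subr_eq0 -!galg_rep_gel -linearB; apply/eqP/matrixP => i j.
by rewrite mxE e0 // (leq_trans (ltn_ord j)) // (leq_trans le_n3) // leq_addl.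
Qed.

End UnitriangularRepresentation.

Lemma morph_der1_cycle_neq1 (gT rT : finGroupType) (G : {group gT})
    (f : {morphism G >-> rT}) a :
  (G^`(1))%g = <[a]>%g -> ~~ abelian (f @* G) -> f a != 1%g.
Proof.
move=> G'a; apply: contraNneq => fa1; apply/derG1P.
have Ga : a \in G by rewrite (subsetP (der_sub 1 G)) // G'a cycle_id.
by rewrite -morphim_der // G'a morphim_cycle // fa1 cycle1.
Qed.

(* [(a, b, c)] stands for the matrix [[1, a, c]; [0, 1, b]; [0, 0, 1]]. *)
Definition heis (p : nat) := ('F_p * 'F_p * 'F_p)%type.

Section HeisenbergLaw.
Local Open Scope ring_scope.
Variable p : nat.
Definition heis_mul (x y : heis p) : heis p :=
  let: (a, b, c) := x in let: (a', b', c') := y in (a + a', b + b', c + c' + a * b').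
Definition heis_one : heis p := (0, 0, 0).
Definition heis_inv (x : heis p) : heis p := let: (a, b, c) := x in (- a, - b, - c + a * b).
Lemma heis_mulA : associative heis_mul.
Proof. by move=> [[a b] c] [[a' b'] c'] [[a'' b''] c''] /=; congr (_, _, _); ring. Qed.
Lemma heis_mul1 : left_id heis_one heis_mul.
Proof. by move=> [[a b] c] /=; congr (_, _, _); ring. Qed.
Lemma heis_mulV : left_inverse heis_one heis_inv heis_mul.
Proof. by move=> [[a b] c] /=; congr (_, _, _); ring. Qed.
End HeisenbergLaw.

HB.instance Definition _ p := Finite.on (heis p).
HB.instance Definition _ p :=
  Finite_isGroup.Build (heis p) (@heis_mulA p) (@heis_mul1 p) (@heis_mulV p).

Section Heisenberg.
Local Open Scope ring_scope.
Variable p : nat.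
Implicit Types (a b c : 'F_p) (x : heis p).

Lemma heis_mulE a b c a' b' c' :
  (((a, b, c) : heis p) * (a', b', c'))%g = (a + a', b + b', c + c' + a * b').
Proof. by []. Qed.

Definition heisX : heis p := (1, 0, 0).
Definition heisY : heis p := (0, 1, 0).
Definition heisZ c : heis p := (0, 0, c).

Lemma expg_heisX n : (heisX ^+ n)%g = (n%:R, 0, 0).
Proof. by elim: n => // n IH; rewrite expgS IH heis_mulE; congr (_, _, _); ring. Qed.

Lemma expg_heisY n : (heisY ^+ n)%g = (0, n%:R, 0).
Proof. by elim: n => // n IH; rewrite expgS IH heis_mulE; congr (_, _, _); ring. Qed.

Lemma expg_heisZ c n : (heisZ c ^+ n)%g = heisZ (n%:R * c).
Proof. by elim: n => [|n IH]; rewrite ?mul0r // expgS IH heis_mulE; congr (_, _, _); ring. Qed.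

Lemma conjg_heisZ c x : (heisZ c ^ x)%g = heisZ c.
Proof. by case: x => [[a b] c']; rewrite /conjg /= /heisZ; congr (_, _, _); ring. Qed.

Lemma commg_heisYX : [~ heisY, heisX]%g = heisZ (-1).
Proof. by rewrite /commg /conjg /= /heisZ; congr (_, _, _); ring. Qed.

Definition heisG : {group heis p} := (<[heisX]> <*> <[heisY]>)%G.

Lemma heisG_nonabelian : ~~ abelian heisG.
Proof.
apply/negP => /centsP/(_ heisX _ heisY _) XY.
have /(congr1 snd)/eqP : commute heisX heisY.
  by apply: XY; rewrite -cycle_subG ?joing_subl ?joing_subr.
by rewrite !heis_mulE /= !mul0r mulr1 !addr0 add0r oner_eq0.
Qed.

Definition heis_mx (x : heis p) : 'M['F_p]_3 :=
  let: (a, b, c) := x in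
  \matrix_(i, j) (nth [::] [:: [:: 1; a; c]; [:: 0; 1; b]; [:: 0; 0; 1]] i)`_j.

Lemma heis_mxM x y : heis_mx (x * y)%g = heis_mx x *m heis_mx y.
Proof.
case: x y => [[a b] c] [[a' b'] c']; apply/matrixP => i j.
rewrite heis_mulE !mxE !big_ord_recl big_ord0 !mxE /=.
by case: i => [[|[|[|i]]] ?] //; case: j => [[|[|[|j]]] ?] //=; ring.
Qed.

Lemma heis_mx_unitriangular x (i j : 'I_3) : (j <= i)%N -> heis_mx x i j = (i == j)%:R.
Proof.
by case: x => [[a b] c]; rewrite mxE; case: i => [[|[|[|i]]] ?] //; case: j => [[|[|[|j]]] ?].
Qed.

Lemma heis_mx_inj : injective heis_mx.
Proof.
move=> [[a b] c] [[a' b'] c'] /matrixP E.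
have := E 0 1; have := E 1 2; have := E 0 2; rewrite !mxE /=.
by move=> -> -> ->.
Qed.


Lemma heisG_homg_GI (gT : finGroupType) (G : {group gT})
    (m n1 n2 o1 o2 o1' o2' u1 u2 : nat) :
  prime p -> isog_GI G p m n1 n2 o1 o2 o1' o2' u1 u2 ->
  (o1 < m)%N -> (o2 < m)%N -> (o1' < m)%N -> (o2' < m)%N -> (0 < n1)%N -> (0 < n2)%N ->
  (heisG \homg G)%g.
Proof.
move=> p_pr GI o1m o2m o1'm o2'm n1_gt0 n2_gt0; rewrite (GI _ (heisG)).
have pX0 e : (0 < e)%N -> ((p ^ e)%:R : 'F_p) = 0.
  by case: e => // e _; rewrite natrX (pcharf0 (pchar_Fp p_pr)) expr0n.
have r1E : ((r1 p m o1)%:R : 'F_p) = 1 by rewrite natrD pX0 ?subn_gt0 // addr0.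
have r2E : ((r2 p m o1 o2)%:R : 'F_p) = 1.
  by rewrite /r2; case: ifP => _; rewrite ?natrD ?pX0 ?subn_gt0 ?addr0 // natrX r1E expr1n.
apply/existsP; exists (heisX, heisY); rewrite /= !xpair_eqE /=.
rewrite eqxx commg_heisYX !expg_heisZ !conjg_heisZ expg_heisX expg_heisY r1E r2E !mul1r.
have m_gt0 : (0 < m)%N := leq_ltn_trans (leq0n o1) o1m.
by rewrite !natrM !pX0 ?subn_gt0 ?mulr0 ?mul0r ?eqxx.
Qed.

End Heisenberg.

Theorem mainTheorem11 (gT : finGroupType)
    (p m n1 n2 o1 o2 o1' o2' u1 u2 : nat) :
  prime p -> odd p ->
  (p.-group [set: gT])%g ->
  ~~ (abelian [set: gT])%g ->
  (exists x y : gT, <<[set x; y]>>%g = [set: gT]) ->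
  cyclic ([set: gT]^`(1))%g ->
  inv_is [set: gT] p m n1 n2 o1 o2 o1' o2' u1 u2 ->
  o1 != o2 ->
  (0 < maxn o1' o2' < m)%N ->
  (2 <= n2)%N ->
  let kG := (fullv : {vspace galg 'F_p gT}) in
  let IG := aug 'F_p [set: gT] in
  let IG' := aug 'F_p ([set: gT]^`(1))%g in
  let A := gprodv IG' kG in
  let B := gprodv IG' IG in
  let C := gprodv (gprodv IG IG) IG in
  [/\ \dim A = (\dim B).+1,
      \dim (A + C)%VS = (\dim C).+1,
      (forall x, x \in A -> x \in B -> x \in C) &
      (forall x, x \in A -> x \in C -> x \in B)].
Proof.
move=> p_pr _ _ _ _ cycG' [[[le_n21 n2_gt0] [o1_lt o2_lt _ _ _] _ _ _] GI] _ o'_lt _.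
move=> kG IG IG' A B C.
have o1m : (o1 < m)%N by move: o1_lt; rewrite leq_min => /andP[].
have o2m : (o2 < m)%N by move: o2_lt; rewrite leq_min => /andP[].
have /andP[o1'm o2'm] : (o1' < m)%N && (o2' < m)%N by rewrite -gtn_max; case/andP: o'_lt.
have n1_gt0 : (0 < n1)%N := leq_trans n2_gt0 le_n21.
have [f im_f] := homgP (heisG_homg_GI p_pr GI o1m o2m o1'm o2'm n1_gt0 n2_gt0).
have [a G'a] := cyclicP cycG'.
have fa1 : f a != 1%g by apply: morph_der1_cycle_neq1 G'a _; rewrite im_f heisG_nonabelian.
have C_e : (gel 'F_p a - gel 'F_p 1%g)%R \notin C.
  apply: (@gel_sub1_notin_aug_cube _ _ 3 (fun g => heis_mx (f g))) => //.
  - by move=> g h; rewrite morphM ?inE // heis_mxM.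
  - by move=> g; apply: heis_mx_unitriangular.
  - by rewrite morph1 (inj_eq (@heis_mx_inj p)).
have B_C : (B <= C)%VS by apply: gprodvS (aug_der1_sub _ [set: gT]%G) (subvv _).
have -> : A = (B + <[gel 'F_p a - gel 'F_p 1%g]>)%VS.
  by rewrite /A /B /IG' /kG /IG G'a gprodv_aug_cycle_fullr.
exact: quotient_line_iso.
Qed.
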